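(* Fix $n\ge 1$. List all periodic canonical increment arrays over all coalition sizes $s=1,\ldots,n$ in some fixed order as $\underline{t}^{(1)},\ldots,\underline{t}^{(M)}$, where $M=\sum_{s=1}^{n}|\mathcal{P}(n,s)|$. For $\underline{t}^{(j)}$ of size $s_j$ let $d^{(j)}=n\,\pi(\underline{t}^{(j)})/s_j$, and let $H_1=0$, $H_j=\sum_{i=1}^{j-1}d^{(i)}$. Say agent $x\in\{1,\ldots,n\}$ is designated for $\underline{t}^{(j)}$ iff $(x-1-H_j)\bmod n<d^{(j)}$ (with $\bmod$ taking values in $\{0,\ldots,n-1\}$). Define the total allocation of agent $x$ as \[CV_x=\bigcup_{s=1}^{n}\{C(x,\underline{t}):\underline{t}\in\mathcal{A}(n,s)\}\;\cup\;\{C(x,\underline{t}^{(j)}):1\le j\le M,\ x\text{ designated for }\underline{t}^{(j)}\}.\] Then for every agent $x\in\{1,\ldots,n\}$, \[\left\lfloor\frac{2^n-1}{n}\right\rfloor\le|CV_x|\le\left\lceil\frac{2^n-1}{n}\right\rceil,\] so the total numbers of coalitions allocated to any two agents differ by at most one.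
   Context: Agent identifiers are $\{1,\ldots,n\}$, arithmetic on identifiers is modulo $n$ with representatives in $\{1,\ldots,n\}$ (a value $0$ is replaced by $n$). An increment array (IA) of size $s$ ($1\le s\le n$) for $n$ agents is a tuple $\underline{t}=\langle t_0,\ldots,t_{s-1}\rangle$ of non-negative integers with $\sum t_i=n-s$. Cumulative increments: $\varphi_1=0$, $\varphi_i=\sum_{k=0}^{i-2}(t_k+1)$ for $2\le i\le s+1$. The coalition generated from $x$ is $C(x,\underline{t})=\{x\}\cup\bigcup_{i=2}^{s}\{(x+\varphi_i)\bmod n\}$ (residues in $\{1,\ldots,n\}$). Two IAs of the same size are equivalent ($\approx$) if one is a circular shift of the other; the canonical representative of an equivalence class is its lexicographically smallest member. $\mathcal{E}(n,s)$ is the set of canonical representatives of IAs of size $s$. The period $\pi(\underline{t})$ is the least $p\in\{1,\ldots,s\}$ such that $\underline{t}$ consists of $s/p$ identical consecutive copies of its first $p$ entries. $\mathcal{A}(n,s)=\{\underline{t}\in\mathcal{E}(n,s):\pi(\underline{t})=s\}$ (aperiodic) and $\mathcal{P}(n,s)=\{\underline{t}\in\mathcal{E}(n,s):\pi(\underline{t})<s\}$ (periodic). *)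

From mathcomp Require Import all_boot all_order all_algebra.
From mathcomp Require Import finmap.
Set Implicit Arguments. Unset Strict Implicit. Unset Printing Implicit Defensive.
Local Open Scope fset_scope.

Definition modrep (n a : nat) : nat := if a %% n == 0 then n else a %% n.

Fixpoint lexle (a b : seq nat) : bool :=
  match a, b with
  | [::], _ => true
  | _ :: _, [::] => false
  | x :: a', y :: b' => (x < y) || ((x == y) && lexle a' b')
  end.

Definition is_IA (n s : nat) (t : seq nat) : bool :=
  [&& 1 <= s, s <= n, size t == s & sumn t == n - s].

Definition canonical (t : seq nat) : bool :=
  all (fun k => lexle t (rot k t)) (iota 0 (size t)).

Definition inE (n s : nat) (t : seq nat) : bool := is_IA n s t && canonical t.

Definition repeats (t : seq nat) (p : nat) : bool :=
  (p %| size t) && (t == flatten (nseq (size t %/ p) (take p t))).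

Definition period (t : seq nat) : nat :=
  head (size t) [seq p <- iota 1 (size t) | repeats t p].

Definition inA (n s : nat) (t : seq nat) : bool := inE n s t && (period t == s).
Definition inP (n s : nat) (t : seq nat) : bool := inE n s t && (period t < s).

Fixpoint bounded_seqs (k m : nat) : seq (seq nat) :=
  match k with
  | 0 => [:: [::]]
  | k'.+1 => [seq a :: r | a <- iota 0 m, r <- bounded_seqs k' m]
  end.

(* explicit enumeration of A(n,s) (entries of an IA are <= n - s <= n) *)
Definition enumA (n s : nat) : seq (seq nat) :=
  [seq t <- bounded_seqs s n.+1 | inA n s t].

Definition phi (t : seq nat) (i : nat) : nat :=
  sumn [seq k.+1 | k <- take i.-1 t].

Definition coalition (n x : nat) (t : seq nat) : {fset nat} :=
  x |` [fset modrep n (x + phi t i) | i in iota 2 (size t).-1].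

(* d^(j) for the j-th periodic IA, and H_j (0-indexed j) *)
Definition dval (n : nat) (t : seq nat) : nat := n * period t %/ size t.
Definition Hval (n : nat) (L : seq (seq nat)) (j : nat) : nat :=
  sumn [seq dval n t | t <- take j L].

(* agent x designated for the j-th entry of L (0-indexed) *)
Definition designated (n : nat) (L : seq (seq nat)) (x j : nat) : bool :=
  (((x%:Z - 1 - (Hval n L j)%:Z) %% n%:Z)%Z < (dval n (nth [::] L j))%:Z)%R.

Definition CV (n : nat) (L : seq (seq nat)) (x : nat) : {fset {fset nat}} :=
  [fset coalition n x t | t in flatten [seq enumA n s | s <- iota 1 n]]
  `|` [fset coalition n x (nth [::] L j)
        | j in [seq j <- iota 0 (size L) | designated n L x j]].

(* Every increment array of size s is a rotation of exactly one canonical array, and a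
   canonical array t has exactly pi(t) distinct rotations, because the shifts fixing t are
   the multiples of pi(t).  As there are C(n-1, s-1) increment arrays of size s and
   d = n pi / s, the values d of the canonical arrays of size s add up to
   (n/s) C(n-1, s-1) = C(n, s), aperiodic arrays having d = n.  Hence
   n |A| + D = 2^n - 1, where D is the sum of the d^(j).

   For a fixed agent x, C(x, t) determines the offsets phi_i of t and thus t, so
   |CV_x| = |A| + #{j | x designated for t^(j)}.  The windows [H_j, H_j + d^(j)) tile
   [0, D) and are at most n long, so x is designated for t^(j) exactly when its window
   contains a number congruent to x - 1 modulo n.  There are floor(D/n) or ceil(D/n) such
   numbers in [0, D). *)

From Pilot Require Import Defs.
From mathcomp Require Import all_boot all_order all_algebra.
From mathcomp Require Import finmap zify.

Set Implicit Arguments.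
Unset Strict Implicit.
Unset Printing Implicit Defensive.

(** * Rotations and canonical forms *)

Section CanonicalRotation.
Import Order.TTheory.
Local Open Scope order_scope.

Lemma lexleE (a b : seq nat) : lexle a b = (a <= b :> seqlexi nat).
Proof.
by elim: a b => [|x a IH] [|y b] //=; rewrite lexi_cons IH leEnat; case: ltngtP.
Qed.

Lemma canonical_le_rot (c : seq nat) k : canonical c -> lexle c (rot k c).
Proof.
move=> /allP c_min; case: (ltnP k (size c)) => [lt_k | /rot_oversize->].
- by apply: c_min; rewrite mem_iota.
- by rewrite lexleE.
Qed.

Lemma exists_canonical_rot (t : seq nat) : (0 < size t)%N ->
  exists k, canonical (rot k t).
Proof.
move=> t0; pose F (k : 'I_(size t)) : seqlexi nat := rot k t.
have [k _ k_min] := @arg_minP _ _ _ (Ordinal t0) xpredT F isT.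
exists k; apply/allP => j _; rewrite lexleE rot_rot_add.
have := leq_rot_add k j t; rewrite leq_eqVlt => /orP[/eqP-> | lt_j].
- by rewrite rot_size; have := k_min (Ordinal t0) isT; rewrite /F /= rot0.
- exact: (k_min (Ordinal lt_j)).
Qed.

Lemma canonical_rot_eq (c : seq nat) k :
  canonical c -> canonical (rot k c) -> rot k c = c.
Proof.
move=> cc ckc; apply: (@le_anti _ (seqlexi nat)).
by rewrite -!lexleE canonical_le_rot // -{2}(rotK k c) canonical_le_rot.
Qed.

End CanonicalRotation.

(* [k] also takes the value [size c], so that [rotationsP] needs no size condition. *)
Definition rotations (T : Type) (c : seq T) := [seq rot k c | k <- iota 0 (size c).+1].

Section Rotations.
Variable T : eqType.
Implicit Types c t u : seq T.

Lemma rotationsP c t : reflect (exists k, t = rot k c) (t \in rotations c).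
Proof.
apply: (iffP mapP) => [[k _ ->] | [k ->]]; first by exists k.
case: (leqP k (size c)) => [le_k | /ltnW/rot_oversize->].
- by exists k; rewrite // mem_iota.
- by exists 0; rewrite ?mem_iota // rot0.
Qed.

Lemma rot_in_rotations c k : rot k c \in rotations c.
Proof. by apply/rotationsP; exists k. Qed.

Lemma rotations_sym c t : (t \in rotations c) = (c \in rotations t).
Proof.
have back u k : exists j, u = rot j (rot k u).
  by exists (size (rot k u) - k); rewrite -[LHS](rotK k).
by apply/rotationsP/rotationsP => -[k ->]; apply: back.
Qed.

Lemma rotations_trans c t u :
  u \in rotations t -> t \in rotations c -> u \in rotations c.
Proof.
by move=> /rotationsP[i ->] /rotationsP[j ->]; rewrite rot_rot_add rot_in_rotations.
Qed.

End Rotations.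

(** * The period *)

Lemma head_filter_iota (P : pred nat) a m d k : a <= k < a + m -> P k ->
  let h := head d [seq j <- iota a m | P j] in
  [/\ a <= h, P h & forall j, a <= j -> P j -> h <= j].
Proof.
elim: m a => [|m IH] a /andP[le_ak lt_k] Pk /=.
  by move: (leq_ltn_trans le_ak lt_k); rewrite addn0 ltnn.
case: ifP => [Pa | nPa] //=.
have lt_ak : a < k by rewrite ltn_neqAle le_ak andbT; apply: contraFneq nPa => ->.
have [|le_h Ph h_min] := IH a.+1 _ Pk; first by rewrite lt_ak addSnnS.
split => //; first exact: ltnW.
move=> j le_aj Pj; apply: h_min => //.
by rewrite ltn_neqAle le_aj andbT; apply: contraFneq nPa => ->.
Qed.

Lemma cat_comm_flatten (T : eqType) (x y : seq T) k :
  x ++ y = y ++ x -> size y = k * size x -> y = flatten (nseq k x).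
Proof.
elim: k y => [|k IH] y xy_comm size_y; first by apply/nilP; rewrite /nilp size_y.
have le_xy : size x <= size y by rewrite size_y mulSn leq_addr.
have take_y : take (size x) y = x.
  by move: (congr1 (take (size x)) xy_comm); rewrite take_size_cat // takel_cat.
set y' := drop (size x) y.
have y_eq : y = x ++ y' by rewrite -{1}(cat_take_drop (size x) y) take_y.
have xy'_comm : x ++ y' = y' ++ x.
  by move: xy_comm; rewrite y_eq -catA => /eqP; rewrite eqseq_cat // eqxx => /eqP.
by rewrite y_eq (IH y') // size_drop size_y mulSn addKn.
Qed.

Lemma repeatsE (c : seq nat) p : 0 < p ->
  repeats c p = (p %| size c) && (rot p c == c).
Proof.
move=> p0; rewrite /repeats; apply: andb_id2l => p_dvd.
have [/size0nil-> | c0] := posnP (size c); first by rewrite div0n rot_oversize.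
have le_p : p <= size c := dvdn_leq c0 p_dvd.
set b := take p c; set q := size c %/ p.
have size_b : size b = p by rewrite size_takel.
have q0 : 0 < q by rewrite divn_gt0 // p0.
have size_c : size c = q.-1.+1 * p by rewrite prednK ?divnK.
apply/eqP/eqP => [c_eq | rot_c].
- rewrite c_eq -(prednK q0) /= -{1}size_b rot_size_cat.
  by elim: q.-1 => [|m IH] /=; rewrite ?cats0 // -catA IH.
- rewrite -{1}(cat_take_drop p c) -(prednK q0) /=; congr (_ ++ _).
  apply: cat_comm_flatten; first by rewrite cat_take_drop -{1}rot_c.
  by rewrite size_drop size_b {1}size_c mulSn addKn.
Qed.

Lemma repeats_size (c : seq nat) : 0 < size c -> repeats c (size c).
Proof. by move=> c0; rewrite /repeats dvdnn divnn c0 take_size /= cats0. Qed.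

Section Period.
Variable c : seq nat.
Hypothesis c0 : 0 < size c.

Lemma period_spec :
  [/\ 0 < period c, repeats c (period c)
    & forall p, 0 < p -> repeats c p -> period c <= p].
Proof.
have range : 1 <= size c < 1 + size c by rewrite c0 add1n ltnSn.
by have [] := @head_filter_iota (repeats c) 1 (size c) (size c) _ range (repeats_size c0).
Qed.

Lemma period_gt0 : 0 < period c.
Proof. by case: period_spec. Qed.

Lemma rot_period : rot (period c) c = c.
Proof. by case: period_spec => p0; rewrite repeatsE // => /andP[_ /eqP]. Qed.

Lemma period_dvdn : period c %| size c.
Proof. by case: period_spec => p0; rewrite repeatsE // => /andP[]. Qed.

Lemma period_leq_size : period c <= size c.
Proof. exact: dvdn_leq c0 period_dvdn. Qed.

Lemma rot_gcdn a b : a <= size c -> b <= size c ->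
  rot a c = c -> rot b c = c -> rot (gcdn a b) c = c.
Proof.
move: {2}(a + b) (leqnn (a + b)) => N; elim: N a b => [|N IH] a b.
  by rewrite leqn0 addn_eq0 => /andP[/eqP-> /eqP->]; rewrite gcdn0.
wlog le_ba : a b / b <= a.
  move=> W le_abN le_a le_b ra rb; case: (leqP b a) => [le_ba | /ltnW le_ab].
  - exact: W.
  - by rewrite gcdnC W // addnC.
move=> le_abN le_a le_b ra rb; have [-> | b0] := posnP b; first by rewrite gcdn0.
rewrite -(subnK le_ba) gcdnC gcdnDr; apply: IH; rewrite ?subnK //; first lia.
  exact: leq_trans (leq_subr _ _) le_a.
by rewrite -{1}rb -rotD ?subnK.
Qed.

Lemma period_leq_rot k : 0 < k <= size c -> rot k c = c -> period c <= k.
Proof.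
move=> /andP[k0 le_k] rk; have [_ _ p_min] := period_spec.
have g0 : 0 < gcdn k (size c) by rewrite gcdn_gt0 k0.
apply: leq_trans (dvdn_leq k0 (dvdn_gcdl k (size c))); apply: (p_min _ g0).
by rewrite repeatsE // dvdn_gcdr (rot_gcdn le_k (leqnn _) rk (rot_size c)) eqxx.
Qed.

Lemma rot_mulp q : q * period c <= size c -> rot (q * period c) c = c.
Proof.
elim: q => [|q IH] le_q; first by rewrite rot0.
have le_q' : q * period c <= size c.
  by apply: leq_trans le_q; rewrite leq_mul2r leqnSn orbT.
by rewrite mulSn rotD // IH // rot_period.
Qed.

Lemma rot_modp k : k <= size c -> rot k c = rot (k %% period c) c.
Proof.
move=> le_k; have le_q : k %/ period c * period c <= size c.
  by apply: leq_trans le_k; rewrite leq_divM.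
by rewrite {1}(divn_eq k (period c)) addnC rotD ?rot_mulp // addnC -divn_eq.
Qed.

Lemma rot_inj_period a b : a < period c -> b < period c -> rot a c = rot b c -> a = b.
Proof.
wlog le_ab : a b / a <= b.
  move=> W lt_a lt_b e; case: (leqP a b) => [le_ab | /ltnW le_ba].
  - exact: W.
  - by apply/esym/W.
move=> lt_a lt_b e; apply/eqP; rewrite eqn_leq le_ab /= leqNgt -subn_gt0.
apply/negP => ba0.
have le_b : b <= size c := leq_trans (ltnW lt_b) period_leq_size.
have : period c <= b - a.
  apply: period_leq_rot; first by rewrite ba0 (leq_trans (leq_subr _ _) le_b).
  by apply: (@rot_inj a); rewrite -rotD ?subnKC // e.
by rewrite leqNgt (leq_ltn_trans (leq_subr a b) lt_b).
Qed.

Lemma size_undup_rotations : size (undup (rotations c)) = period c.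
Proof.
rewrite -[RHS](size_iota 0) -(size_map (rot^~ c)); apply/perm_size/uniq_perm.
- exact: undup_uniq.
- rewrite map_inj_in_uniq ?iota_uniq // => a b.
  by rewrite !mem_iota !add0n; apply: rot_inj_period.
move=> t; rewrite mem_undup; apply/mapP/mapP => -[k];
  rewrite mem_iota add0n => /andP[_ lt_k] ->.
- by exists (k %% period c); rewrite 1?rot_modp // mem_iota ltn_mod period_gt0.
- by exists k; rewrite // mem_iota /= ltnS (leq_trans (ltnW lt_k)) ?period_leq_size.
Qed.

End Period.

(** * Counting increment arrays *)

Lemma mem_bounded_seqs k m t :
  (t \in bounded_seqs k m) = (size t == k) && all (fun a => a < m) t.
Proof.
elim: k t => [|k IH] t /=; first by rewrite inE; case: t.
apply/allpairsP/idP => [[[a u] /= [a_in u_in ->]] | ].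
- by move: u_in a_in; rewrite IH mem_iota add0n /= => /andP[/eqP-> ->] ->; rewrite eqxx.
- case: t => [//|a u] /= /andP[/eqP[size_u] /andP[lt_a all_u]].
  by exists (a, u); rewrite /= IH mem_iota lt_a size_u eqxx.
Qed.

Lemma uniq_bounded_seqs k m : uniq (bounded_seqs k m).
Proof.
elim: k => [//|k IH] /=; apply: allpairs_uniq => //; first exact: iota_uniq.
by move=> [a u] [b v] _ _ /= [-> ->].
Qed.

Lemma leq_sumn_mem (t : seq nat) a : a \in t -> a <= sumn t.
Proof.
elim: t => [//|b t IH] /=; rewrite inE => /orP[/eqP-> | /IH]; first exact: leq_addr.
by move/leq_trans; apply; rewrite leq_addl.
Qed.

Lemma is_IA_size n s t : is_IA n s t -> size t = s.
Proof. by case/and4P=> _ _ /eqP. Qed.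

Lemma is_IA_rot n s t k : is_IA n s (rot k t) = is_IA n s t.
Proof. by rewrite /is_IA size_rot sumn_rot. Qed.

Lemma mem_filter_bounded_seqs n s (P : pred (seq nat)) t :
  (forall u, P u -> is_IA n s u) -> (t \in [seq u <- bounded_seqs s n.+1 | P u]) = P t.
Proof.
move=> P_IA; rewrite mem_filter andb_idr // => /P_IA /and4P[_ _ size_t /eqP sum_t].
rewrite mem_bounded_seqs size_t; apply/allP => a /leq_sumn_mem; lia.
Qed.

(* The increment arrays of size [k.+1], obtained from the ordinal partitions of
   [card_ord_partitions]. *)
Definition IAs (n k : nat) : seq (seq nat) :=
  [seq map val (val u) | u in [set u : k.+1.-tuple 'I_(n - k.+1).+1
                                     | \sum_(i <- u) i == n - k.+1]].

Lemma size_IAs n k : k < n -> size (IAs n k) = 'C(n.-1, k).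
Proof. by move=> lt_kn; rewrite size_image card_ord_partitions; congr 'C(_, _); lia. Qed.

Lemma uniq_IAs n k : uniq (IAs n k).
Proof.
by rewrite map_inj_uniq ?enum_uniq // => u v /(inj_map val_inj) /val_inj.
Qed.

Lemma mem_IAs n k t : k < n -> (t \in IAs n k) = is_IA n k.+1 t.
Proof.
move=> lt_kn; rewrite /is_IA lt_kn /=.
have sumE (u : seq 'I_(n - k.+1).+1) : \sum_(i <- u) i = sumn (map val u).
  by rewrite sumnE big_map.
apply/imageP/andP => [[u] | [/eqP size_t /eqP sum_t]].
- by rewrite inE sumE => sum_u ->; rewrite size_map size_tuple.
pose u := map_tuple (@inord (n - k.+1)) (Tuple (introT eqP size_t)).
have u_t : map val u = t.
  rewrite -[RHS]map_id -map_comp; apply/eq_in_map => a /leq_sumn_mem le_a /=.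
  by rewrite inordK // ltnS -sum_t.
by exists u; rewrite // inE sumE u_t sum_t.
Qed.

Definition canonicals (n s : nat) := [seq t <- bounded_seqs s n.+1 | Defs.inE n s t].
Definition enumP (n s : nat) := [seq t <- bounded_seqs s n.+1 | inP n s t].

Lemma mem_canonicals n s t : (t \in canonicals n s) = Defs.inE n s t.
Proof. by apply: mem_filter_bounded_seqs => u /andP[]. Qed.

Lemma mem_enumA n s t : (t \in enumA n s) = inA n s t.
Proof. by apply: mem_filter_bounded_seqs => u /andP[/andP[]]. Qed.

Lemma mem_enumP n s t : (t \in enumP n s) = inP n s t.
Proof. by apply: mem_filter_bounded_seqs => u /andP[/andP[]]. Qed.

Lemma uniq_canonicals n s : uniq (canonicals n s).
Proof. exact/filter_uniq/uniq_bounded_seqs. Qed.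

Lemma count_canonical_rotations n s t : is_IA n s t ->
  count (fun c => t \in rotations c) (canonicals n s) = 1.
Proof.
move=> t_IA; have t0 : 0 < size t by case/and4P: t_IA => s0 _ /eqP->.
have [k ck] := exists_canonical_rot t0.
have ck_in : rot k t \in canonicals n s by rewrite mem_canonicals /Defs.inE is_IA_rot t_IA.
have <- : count_mem (rot k t) (canonicals n s) = 1.
  by rewrite count_uniq_mem ?uniq_canonicals ?ck_in.
apply: eq_in_count => c; rewrite mem_canonicals => /andP[_ cc] /=.
apply/idP/eqP => [t_c | ->]; last by rewrite rotations_sym rot_in_rotations.
have /rotationsP[j kt_eq] : rot k t \in rotations c.
  exact: rotations_trans (rot_in_rotations _ _) t_c.
by rewrite kt_eq canonical_rot_eq // -kt_eq.
Qed.

Lemma count_sumE (T : Type) (P : pred T) s : count P s = \sum_(x <- s) P x.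
Proof. by rewrite -sum1_count big_mkcond. Qed.

Lemma count_mem_undup (T : eqType) (l X : seq T) : uniq X -> {subset l <= X} ->
  count (mem l) X = size (undup l).
Proof.
move=> uX sub_lX; rewrite -size_filter; apply/perm_size/uniq_perm.
- exact: filter_uniq.
- exact: undup_uniq.
- by move=> u; rewrite mem_filter mem_undup andb_idr //; apply: sub_lX.
Qed.

Lemma sum_period_canonicals n s : 0 < s <= n ->
  \sum_(c <- canonicals n s) period c = 'C(n.-1, s.-1).
Proof.
case: s => // k /= lt_kn; rewrite -size_IAs // -sum1_size.
transitivity (\sum_(t <- IAs n k) \sum_(c <- canonicals n k.+1) (t \in rotations c)).
  rewrite exchange_big big_seq [RHS]big_seq; apply: eq_bigr => c.
  rewrite mem_canonicals => /andP[c_IA _]; have c0 : 0 < size c.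
    by rewrite (is_IA_size c_IA).
  rewrite -count_sumE (eq_count (a2 := mem (rotations c))) => [|t]; last first.
    by rewrite /= rotations_sym.
  rewrite count_mem_undup ?uniq_IAs ?size_undup_rotations // => u /rotationsP[j ->].
  by rewrite mem_IAs // is_IA_rot.
rewrite big_seq [RHS]big_seq; apply: eq_bigr => t.
by rewrite mem_IAs // => /count_canonical_rotations; rewrite count_sumE.
Qed.

Lemma sumn_flatten_nseq m (b : seq nat) : sumn (flatten (nseq m b)) = m * sumn b.
Proof. by elim: m => [|m IH] //=; rewrite sumn_cat IH mulSn. Qed.

Lemma dval_mul_size n c : is_IA n (size c) c -> dval n c * size c = n * period c.
Proof.
case/and4P=> c0 le_cn _ /eqP sum_c; have [p0 /andP[p_dvd /eqP c_eq] _] := period_spec c0.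
set p := period c in p0 p_dvd c_eq *; set b := take p c in c_eq.
set q := size c %/ p in c_eq.
have size_c : size c = q * p by rewrite divnK.
have sum_b : sumn c = q * sumn b by rewrite {1}c_eq sumn_flatten_nseq.
have n_eq : n = q * (sumn b + p) by rewrite mulnDr -sum_b -size_c; lia.
have np_eq : n * p = size c * (sumn b + p) by rewrite n_eq size_c mulnAC.
by rewrite /dval -/p np_eq mulKn // mulnC.
Qed.

Lemma dval_leq n c : is_IA n (size c) c -> dval n c <= n.
Proof.
move=> c_IA; have c0 : 0 < size c by case/and4P: c_IA.
by rewrite -(leq_pmul2r c0) dval_mul_size // leq_mul2l period_leq_size ?orbT.
Qed.

Lemma dval_aperiodic n c : 0 < size c -> period c = size c -> dval n c = n.
Proof. by move=> c0 p_eq; rewrite /dval p_eq mulnK. Qed.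

Lemma sum_dval_canonicals n s : 0 < s <= n ->
  \sum_(c <- canonicals n s) dval n c = 'C(n, s).
Proof.
move=> s_range; have s0 : 0 < s by case/andP: s_range.
apply/eqP; rewrite -(eqn_pmul2r s0) big_distrl /= big_seq.
rewrite (eq_bigr (fun c => n * period c)) => [|c]; last first.
  rewrite mem_canonicals => /andP[c_IA _].
  by rewrite -(is_IA_size c_IA) dval_mul_size ?(is_IA_size c_IA).
rewrite -big_seq -big_distrr /= sum_period_canonicals //.
by rewrite mul_bin_diag prednK // mulnC.
Qed.

Lemma sum_dval_split n s : 0 < s <= n ->
  n * size (enumA n s) + \sum_(t <- enumP n s) dval n t = 'C(n, s).
Proof.
move=> s_range; rewrite -sum_dval_canonicals // [RHS]big_filter.
rewrite [RHS](bigID (fun t => period t == s)) /=; congr (_ + _).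
- rewrite -big_filter -/(enumA n s) big_seq (eq_bigr (fun=> n)) => [|t].
    by rewrite -big_seq big_const_seq count_predT iter_addn_0 mulnC.
  rewrite mem_enumA => /andP[/andP[t_IA _] /eqP p_eq].
  by apply: dval_aperiodic; rewrite (is_IA_size t_IA) //; case/andP: s_range.
- rewrite big_filter; apply: eq_bigl => t; rewrite /inP.
  case t_in: (Defs.inE n s t) => //=; move: t_in => /andP[t_IA _].
  have t0 : 0 < size t by rewrite (is_IA_size t_IA); case/andP: s_range.
  by rewrite ltn_neqAle -(is_IA_size t_IA) period_leq_size ?andbT.
Qed.

Lemma sum_binomial n : \sum_(s <- iota 1 n) 'C(n, s) = 2 ^ n - 1.
Proof.
have := expnDn 1 1 n; rewrite big_ord_recl /= bin0 !exp1n !muln1 add1n => ->.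
have -> : iota 1 n = map S (index_iota 0 n) by rewrite /index_iota subn0 -(iotaDl 1 0).
rewrite addnC addnK big_map big_mkord.
by apply: eq_bigr => i _; rewrite !exp1n !muln1.
Qed.

Lemma uniq_flatten_keyed (T : eqType) (key : T -> nat) (F : nat -> seq T) (r : seq nat) :
  uniq r -> (forall s, uniq (F s)) -> (forall s t, t \in F s -> key t = s) ->
  uniq (flatten [seq F s | s <- r]).
Proof.
move=> + F_uniq F_key; elim: r => [//|s r IH] /= /andP[s_notin r_uniq].
rewrite cat_uniq F_uniq IH //= andbT; apply/hasPn => t /flatten_mapP[s' s'_in t_in].
by apply: contra s_notin => /F_key t_key; rewrite -t_key (F_key _ _ t_in).
Qed.

Definition aperiodics (n : nat) := flatten [seq enumA n s | s <- iota 1 n].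
Definition periodics (n : nat) := flatten [seq enumP n s | s <- iota 1 n].

Lemma aperiodics_inA n t : t \in aperiodics n -> inA n (size t) t.
Proof.
by case/flatten_mapP => s _; rewrite mem_enumA => /[dup] /andP[/andP[/is_IA_size->]].
Qed.

Lemma mem_periodics n t : (t \in periodics n) = has (fun s => inP n s t) (iota 1 n).
Proof.
by apply/flatten_mapP/hasP => -[s s_in t_in]; exists s; rewrite ?mem_enumP in t_in *.
Qed.

Lemma uniq_aperiodics n : uniq (aperiodics n).
Proof.
apply: (@uniq_flatten_keyed _ size) => [|s|s t]; first exact: iota_uniq.
  exact/filter_uniq/uniq_bounded_seqs.
by rewrite mem_enumA => /andP[/andP[/is_IA_size]].
Qed.

Lemma uniq_periodics n : uniq (periodics n).
Proof.
apply: (@uniq_flatten_keyed _ size) => [|s|s t]; first exact: iota_uniq.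
  exact/filter_uniq/uniq_bounded_seqs.
by rewrite mem_enumP => /andP[/andP[/is_IA_size]].
Qed.

Lemma allocation_total n L : uniq L ->
  (forall t, (t \in L) = has (fun s => inP n s t) (iota 1 n)) ->
  n * size (aperiodics n) + sumn [seq dval n t | t <- L] = 2 ^ n - 1.
Proof.
move=> L_uniq mem_L; have L_perm : perm_eq L (periodics n).
  by apply: uniq_perm => // [|t]; rewrite ?uniq_periodics // mem_L mem_periodics.
rewrite sumnE big_map (perm_big _ L_perm) big_flatten big_map /=.
rewrite size_flatten /shape -map_comp sumnE big_map big_distrr -big_split -sum_binomial.
rewrite big_seq [RHS]big_seq.
by apply: eq_bigr => s; rewrite mem_iota add1n ltnS => /sum_dval_split.
Qed.

(** * Coalitions *)

Definition offsets (t : seq nat) := [seq phi t i | i <- iota 1 (size t)].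

Lemma offsets_cons a u : offsets (a :: u) = 0 :: [seq a.+1 + p | p <- offsets u].
Proof.
rewrite /offsets /= (iotaDl 1 1) -!map_comp; congr (_ :: _).
by apply/eq_in_map => -[|i]; rewrite mem_iota.
Qed.

Lemma offsets_ltn t : all (fun p => p < sumn t + size t) (offsets t).
Proof.
elim: t => [//|a u IH]; rewrite offsets_cons /= addnS ltn0Sn /= all_map.
by apply: sub_all IH => p /=; lia.
Qed.

Lemma sorted_offsets t : sorted ltn (offsets t).
Proof.
elim: t => [//|a u IH]; rewrite offsets_cons /= (path_sortedE ltn_trans) all_map sorted_map.
apply/andP; split; first by apply/allP.
by apply: sub_sorted IH => p q /=; rewrite ltn_add2l.
Qed.

Lemma offsets_inj t t' :
  sumn t + size t = sumn t' + size t' -> offsets t = offsets t' -> t = t'.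
Proof.
elim: t t' => [|a u IH] [|a' u'] //; rewrite !offsets_cons => sum_eq [offsets_eq].
have a_eq : a = a'.
  move: offsets_eq sum_eq; case: u u' {IH} => [|b w] [|b' w'];
    rewrite ?offsets_cons //=; first lia.
  by case=> head_eq _ _; lia.
rewrite -a_eq in offsets_eq sum_eq *; congr (_ :: _).
by apply: IH; [move: sum_eq => /=; lia | exact: (inj_map (@addnI a.+1) offsets_eq)].
Qed.

Lemma modrep_small n x : 0 < x <= n -> modrep n x = x.
Proof.
case/andP=> x0 le_xn; rewrite /modrep; case: (ltnP x n) => [lt_xn | le_nx].
- by rewrite modn_small // ifN // -lt0n.
- suff -> : x = n by rewrite modnn.
  lia.
Qed.

Lemma modrep_mod n a : modrep n a = a %[mod n].
Proof. by rewrite /modrep; case: ifP => [/eqP-> | _]; rewrite ?modnn ?modn_mod. Qed.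

Lemma modrep_addn_inj n x : {in gtn n &, injective (fun p => modrep n (x + p))}.
Proof.
move=> p q lt_p lt_q /(congr1 (modn^~ n)) /=; rewrite !modrep_mod => /eqP.
by rewrite eqn_modDl !modn_small // => /eqP.
Qed.

Lemma coalitionE n x t : 0 < x <= n -> 0 < size t ->
  coalition n x t = [fset modrep n (x + p) | p in offsets t]%fset.
Proof.
move=> x_range; case: t => // a u _.
have -> : offsets (a :: u) = 0 :: [seq phi (a :: u) i | i <- iota 2 (size u)] by [].
apply/fsetP => y; rewrite in_fset1U.
apply/orP/imfsetP => [[/eqP-> | /imfsetP[i i_in ->]] | [p]].
- by exists 0; rewrite ?inE // addn0 modrep_small.
- by exists (phi (a :: u) i); rewrite // inE map_f ?orbT.
- rewrite inE => /orP[/eqP-> -> | /mapP[i i_in ->] ->].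
  + by left; rewrite addn0 modrep_small.
  + by right; apply/imfsetP; exists i.
Qed.

Lemma coalition_inj n x t t' : 0 < x <= n ->
  is_IA n (size t) t -> is_IA n (size t') t' ->
  coalition n x t = coalition n x t' -> t = t'.
Proof.
move=> x_range /and4P[t0 le_tn _ /eqP sum_t] /and4P[t0' le_t'n _ /eqP sum_t'].
rewrite !coalitionE //; set f := fun p => modrep n (x + p) => coal_eq.
have off_lt u : sumn u = n - size u -> size u <= n -> all (gtn n) (offsets u).
  by move=> sum_u le_un; apply: sub_all (offsets_ltn u); move=> p /=; lia.
have mem_off u p : all (gtn n) (offsets u) -> p < n ->
    (p \in offsets u) = (f p \in [fset f q | q in offsets u]%fset).
  move=> /allP u_lt lt_p; apply/idP/imfsetP => [p_in | [q q_in f_eq]]; first by exists p.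
  by rewrite (modrep_addn_inj lt_p (u_lt q q_in) f_eq).
apply: offsets_inj; first lia.
apply: (irr_sorted_eq ltn_trans ltnn); rewrite ?sorted_offsets // => p.
case: (ltnP p n) => [lt_p | le_np].
- by rewrite !mem_off ?coal_eq // off_lt.
- have notin u : all (gtn n) (offsets u) -> p \notin offsets u.
    by move=> /allP u_lt; apply/negP => /u_lt; rewrite /= ltnNge le_np.
  by rewrite !(negbTE (notin _ _)) // off_lt.
Qed.

(** * Designation *)

Section Designation.
Import GRing.Theory Num.Theory.
Local Open Scope ring_scope.

Lemma eqz_mod_addn_small (n h i : nat) (a : int) : (i < n)%N ->
  ((h + i)%:Z == a %[mod n])%Z = (i%:Z == ((a - h%:Z) %% n)%Z)%Z.
Proof.
move=> lt_i; rewrite -[i%:Z in RHS](@modz_small i n) ?lez_nat ?ltz_nat // !eqz_mod_dvd.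
by rewrite PoszD opprB addrCA addrA.
Qed.

(* The only candidate in the window is [h + (a - h) mod n]. *)
Lemma count_mod_window (n h d : nat) (a : int) : (0 < n)%N -> (d <= n)%N ->
  count (fun m : nat => m%:Z == a %[mod n])%Z (iota h d) = (((a - h%:Z) %% n)%Z < d%:Z).
Proof.
move=> n0 le_dn; have n_neq0 : n%:Z != 0 by rewrite eqz_nat -lt0n.
have r_ge0 : 0 <= ((a - h%:Z) %% n)%Z := modz_ge0 _ n_neq0.
have r_lt : ((a - h%:Z) %% n)%Z < n%:Z by rewrite ltz_pmod ?ltz_nat.
set r := ((a - h%:Z) %% n)%Z in r_ge0 r_lt *; have r_nat : r = `|r|%N by rewrite gez0_abs.
have -> : iota h d = map (addn h) (iota 0 d) by rewrite -iotaDl addn0.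
rewrite count_map (eq_in_count (a2 := pred1 `|r|%N)) => [|i].
  by rewrite count_uniq_mem ?iota_uniq // mem_iota r_nat ltz_nat.
rewrite mem_iota /= => lt_i; rewrite eqz_mod_addn_small ?(leq_trans lt_i) // -/r.
by rewrite {1}r_nat eqz_nat.
Qed.

Lemma count_mod_windows (n h : nat) (a : int) (ds : seq nat) :
  (0 < n)%N -> all (fun d => d <= n)%N ds ->
  count (fun j => ((a - (h + sumn (take j ds))%:Z) %% n)%Z < (nth 0 ds j)%:Z)
        (iota 0 (size ds))
  = count (fun m : nat => m%:Z == a %[mod n])%Z (iota h (sumn ds)).
Proof.
move=> n0; elim: ds h => [//|d ds IH] h /= /andP[le_dn all_ds].
rewrite iotaD count_cat -(count_mod_window _ _ n0 le_dn) -(IH (h + d)%N) // addn0.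
rewrite (iotaDl 1 0) count_map; congr (_ + _)%N.
by apply: eq_count => j /=; rewrite addnA.
Qed.

Lemma count_mod_iota (n D : nat) (a : int) : (0 < n)%N ->
  count (fun m : nat => m%:Z == a %[mod n])%Z (iota 0 D)
  = (D %/ n + ((a %% n)%Z < (D %% n)%:Z)%R)%N.
Proof.
move=> n0; have modz_subMn k : ((a - (k * n)%:Z) %% n = a %% n)%Z.
  by rewrite PoszM -mulNr addrC modzMDl.
have blocks q : count (fun m : nat => m%:Z == a %[mod n])%Z (iota 0 (q * n)) = q.
  elim: q => [|q IH]; first by rewrite mul0n.
  rewrite mulSnr iotaD count_cat IH count_mod_window // modz_subMn ltz_pmod ?ltz_nat //.
  by rewrite addn1.
rewrite {1}(divn_eq D n) iotaD count_cat blocks count_mod_window ?modz_subMn //.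
exact/ltnW/ltn_pmod.
Qed.

Lemma count_designated n L x : (0 < x <= n)%N -> all (fun t => dval n t <= n)%N L ->
  count (designated n L x) (iota 0 (size L))
  = (sumn [seq dval n t | t <- L] %/ n + (x.-1 < sumn [seq dval n t | t <- L] %% n))%N.
Proof.
move=> /andP[x0 le_xn] L_le; have n0 : (0 < n)%N := leq_trans x0 le_xn.
have x_eq : x%:Z - 1 = (x.-1)%:Z by rewrite -subn1 -subzn.
transitivity (count (fun m : nat => m%:Z == (x.-1)%:Z %[mod n])%Z
                    (iota 0 (sumn [seq dval n t | t <- L]))).
  rewrite -(count_mod_windows 0 _ n0) ?all_map // size_map.
  apply: eq_in_count => j; rewrite mem_iota /= => lt_j.
  by rewrite /designated /Hval (nth_map [::]) // map_take -x_eq.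
rewrite count_mod_iota // modz_small ?ltz_nat // lez_nat leq0n.
by rewrite (leq_trans _ le_xn) ?ltn_predL.
Qed.

End Designation.

Lemma ceil_divn m n : 0 < n -> (m + n.-1) %/ n = m %/ n + (0 < m %% n).
Proof.
move=> n0; rewrite {1}(divn_eq m n) -addnA divnMDl //; congr (_ + _).
have lt_r := ltn_pmod m n0.
have [-> | r0] := posnP (m %% n); first by rewrite add0n divn_small ?ltn_predL.
rewrite (_ : m %% n + n.-1 = 1 * n + (m %% n).-1); last lia.
by rewrite divnMDl // divn_small ?r0 // (leq_ltn_trans (leq_pred _) lt_r).
Qed.

Local Open Scope fset_scope.

Lemma card_CV n L x : 0 < x <= n -> uniq L -> {in L, forall t, inP n (size t) t} ->
  (#|` CV n L x| = size (aperiodics n) + count (designated n L x) (iota 0 (size L)))%N.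
Proof.
move=> x_range L_uniq L_inP; rewrite /CV -/(aperiodics n) -size_filter.
set J := [seq j <- iota 0 (size L) | designated n L x j].
have A_IA t : t \in aperiodics n -> is_IA n (size t) t.
  by move/aperiodics_inA => /andP[/andP[]].
have L_IA t : t \in L -> is_IA n (size t) t by move/L_inP => /andP[/andP[]].
have nth_L j : j \in J -> nth [::] L j \in L.
  by rewrite mem_filter mem_iota => /and3P[_ _ lt_j]; apply: mem_nth.
have card_A : #|` [fset coalition n x t | t in aperiodics n]| = size (aperiodics n).
  rewrite card_in_imfset /= ?undup_id ?uniq_aperiodics // => t t' /A_IA + /A_IA.
  exact: coalition_inj.
have card_J : #|` [fset coalition n x (nth [::] L j) | j in J]| = size J.
  rewrite card_in_imfset /= ?undup_id ?filter_uniq ?iota_uniq // => j j' j_in j'_in.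
  move/(coalition_inj x_range (L_IA _ (nth_L _ j_in)) (L_IA _ (nth_L _ j'_in)))/eqP.
  move: j_in j'_in; rewrite !mem_filter !mem_iota /= => /andP[_ lt_j] /andP[_ lt_j'].
  by rewrite nth_uniq // => /eqP.
rewrite -card_A -card_J; apply/eqP; rewrite (leq_card_fsetU _ _).2.
apply/fdisjointP => _ /imfsetP[t t_in ->]; apply/negP => /imfsetP[j j_in].
move/(coalition_inj x_range (A_IA _ t_in) (L_IA _ (nth_L _ j_in))) => t_eq.
have := L_inP _ (nth_L _ j_in); rewrite -t_eq => /andP[_ lt_p].
by have := aperiodics_inA t_in => /andP[_ /eqP p_eq]; rewrite p_eq ltnn in lt_p.
Qed.

Theorem theorem10 (n : nat) (L : seq (seq nat)) :
  1 <= n ->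
  uniq L ->
  (forall t : seq nat, (t \in L) = has (fun s => inP n s t) (iota 1 n)) ->
  forall x : nat, 1 <= x <= n ->
    ((2 ^ n - 1) %/ n <= #|` CV n L x |)%N /\
    (#|` CV n L x | <= (2 ^ n - 1 + n.-1) %/ n)%N.
Proof.
move=> n0 L_uniq mem_L x x_range.
have L_inP : {in L, forall t, inP n (size t) t}.
  by move=> t; rewrite mem_L => /hasP[s _ /[dup] /andP[/andP[/is_IA_size->]]].
have L_le : all (fun t => dval n t <= n)%N L.
  by apply/allP => t /L_inP /andP[/andP[/dval_leq]].
rewrite card_CV // count_designated // -(allocation_total L_uniq mem_L).
rewrite ceil_divn // mulnC modnMDl divnMDl // -!addnA !leq_add2l.
split; first exact: leq_addr.
case: ltnP => //= lt_x.
by rewrite (leq_ltn_trans (leq0n _) lt_x).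
Qed.
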